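(* Let $K\subset\mathbb{R}^n$ be a closed convex set. The map $\sigma\mapsto\overline{\varepsilon_K}(\sigma)$ is non-decreasing on $[0,\infty)$. If $c\ge1$, then $\overline{\varepsilon_K}(\sigma)\le\overline{\varepsilon_K}(c\sigma)\le c\,\overline{\varepsilon_K}(\sigma)$. If $c<1$, then $c\,\overline{\varepsilon_K}(\sigma)\le\overline{\varepsilon_K}(c\sigma)\le\overline{\varepsilon_K}(\sigma)$.
   Context: Local Gaussian width $w_\mu(\varepsilon)=\mathbb{E}\sup_{t\in B(\mu,\varepsilon)\cap K}\langle x,t\rangle$, $x\sim N(0,\mathbb{I}_n)$, $B$ the closed Euclidean ball. For $\sigma\ge0$ and $\mu\in K$, $\varepsilon_\mu(\sigma)=\operatorname{argmax}_{\varepsilon\ge0}[\sigma w_\mu(\varepsilon)-\varepsilon^2/2]$, and $\overline{\varepsilon_K}(\sigma)=\sup_{\mu\in K}\varepsilon_\mu(\sigma)$. *)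

From HB Require Import structures.
From mathcomp Require Import all_boot all_order all_algebra.
From mathcomp Require Import all_classical all_reals all_analysis.
Set Implicit Arguments. Unset Strict Implicit. Unset Printing Implicit Defensive.
Import Order.TTheory GRing.Theory Num.Theory.
Import numFieldTopology.Exports numFieldNormedType.Exports.
Local Open Scope classical_set_scope.
Local Open Scope ring_scope.

Definition inner {R : realType} {n : nat} (x t : 'rV[R]_n) : R :=
  \sum_(i < n) x 0 i * t 0 i.

Definition eball {R : realType} {n : nat} (mu : 'rV[R]_n) (eps : R) : set 'rV[R]_n :=
  [set t | 0 <= eps /\ \sum_(i < n) (t 0 i - mu 0 i) ^+ 2 <= eps ^+ 2].

(* Expectation under the standard Gaussian N(0, I_n) on R^n, as the iterated
   integral against the standard normal probability on each coordinate. *)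
Fixpoint gauss_exp {R : realType} (n : nat) : ('rV[R]_n -> \bar R) -> \bar R :=
  match n return ('rV[R]_n -> \bar R) -> \bar R with
  | 0 => fun f => f 0
  | m.+1 => fun f =>
      (\int[normal_prob (0:R) 1]_t
         gauss_exp (fun v : 'rV[R]_m => f (castmx (erefl, add1n m) (row_mx (\row_(_ < 1) t) v))))%E
  end.

Definition local_gw {R : realType} {n : nat} (K : set 'rV[R]_n) (mu : 'rV[R]_n) (eps : R)
  : \bar R :=
  gauss_exp (fun x : 'rV[R]_n => (sup [set inner x t | t in eball mu eps `&` K])%:E).

Definition is_eps_mu {R : realType} {n : nat} (K : set 'rV[R]_n) (mu : 'rV[R]_n)
  (sigma eps : R) : Prop :=
  0 <= eps /\
  forall e : R, 0 <= e ->
    (sigma%:E * local_gw K mu e - (e ^+ 2 / 2)%:E <=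
     sigma%:E * local_gw K mu eps - (eps ^+ 2 / 2)%:E)%E.

Definition eps_bar {R : realType} {n : nat} (K : set 'rV[R]_n) (sigma : R) : R :=
  sup [set e | exists2 mu, K mu & is_eps_mu K mu sigma e].

From HB Require Import structures.
From mathcomp Require Import all_boot all_order all_algebra.
From mathcomp Require Import all_classical all_reals all_analysis.
From mathcomp Require Import ring lra.
From mathcomp Require Import measurable_realfun.
Import Order.TTheory GRing.Theory Num.Theory.
Import numFieldTopology.Exports numFieldNormedType.Exports.
Set Implicit Arguments. Unset Strict Implicit.
Local Open Scope classical_set_scope.
Local Open Scope ring_scope.

(* Because K is convex, the sup of <x, t> over
   B(mu, eps) /\ K is concave and nondecreasing in eps, and at most
   <x, mu> + eps |x|_1; taking Gaussian expectations, the local width w(eps) is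
   concave, nondecreasing and w(eps) <= w(0) + C eps with C = E|x|_1 not
   depending on mu.  For such a w the maximisers eps(sigma) of
   sigma w(eps) - eps^2/2 exist, lie in [0, 2 sigma C], are nondecreasing in
   sigma, and satisfy eps(c sigma) <= c eps(sigma) for c >= 1 (a first-order
   comparison using concavity).  Taking sups over mu gives the claims; the case c < 1 is the
   case 1/c > 1. *)

Section normal_prob_first_moment.
Context {R : realType}.
Local Notation mu := (@lebesgue_measure R).

Lemma ge0_integral_normal_prob (m s : R) (f : R -> \bar R) :
  (forall x, 0 <= f x)%E -> measurable_fun [set: R] f ->
  (\int[normal_prob m s]_x f x = \int[mu]_x (f x * (normal_pdf m s x)%:E))%E.
Proof.
move=> f0 mf; have dom := normal_prob_dominates m s.
rewrite -(Radon_Nikodym_SigmaFinite.change_of_variables dom) //.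
have mpdf : measurable_fun setT (fun x => (normal_pdf m s x)%:E).
  by apply/measurable_EFinP; exact: measurable_normal_pdf.
have intRN := Radon_Nikodym_SigmaFinite.f_integrable dom.
apply: ae_eq_integral => //.
- by apply: emeasurable_funM => //; exact: measurable_int intRN.
- exact: emeasurable_funM.
- apply: ae_eqe_mul2l; apply: integral_ae_eq => // E _ mE.
  by rewrite -Radon_Nikodym_SigmaFinite.f_integral.
Qed.

Lemma normr_le_expR (t : R) : `|t| <= expR (t ^+ 2 / 4).
Proof.
apply: le_trans (expR_ge1Dx _).
have -> : t ^+ 2 = `|t| ^+ 2 by rewrite real_normK ?num_real.
have := sqr_ge0 (`|t| - 2); nra.
Qed.

Lemma normr_normal_pdf_le (t : R) :
  `|t| * normal_pdf 0 1 t <= normal_peak 1 * normal_fun 0 (Num.sqrt 2) t.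
Proof.
rewrite /normal_pdf oner_eq0 /= /normal_fun !subr0 mulrCA.
rewrite ler_pM2l ?normal_peak_gt0 ?oner_eq0 // sqr_sqrtr ?ler0n // expr1n.
apply: le_trans (ler_wpM2r (expR_ge0 _) (normr_le_expR t)) _.
by rewrite -expRD (_ : t ^+ 2 / 4 + _ = - t ^+ 2 / (2 *+ 2)) ?lexx //; field.
Qed.

Lemma integrable_normr_normal_prob :
  (normal_prob (0:R) 1).-integrable setT (fun t => `|t|%:E).
Proof.
have mabs : measurable_fun setT (fun t : R => `|t|%:E).
  by apply/measurable_EFinP; exact: normr_measurable.
apply/integrableP; split => //.
under eq_integral => t _ do rewrite gee0_abs ?lee_fin //.
rewrite ge0_integral_normal_prob //.
have sqrt2_neq0 : Num.sqrt (2:R) != 0 by rewrite sqrtr_eq0 -ltNge ltr0n.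
have peak_gt0 := normal_peak_gt0 sqrt2_neq0.
pose g (t : R) := ((normal_peak 1 / normal_peak (Num.sqrt 2))%:E *
  (normal_pdf 0 (Num.sqrt 2) t)%:E)%E.
have intg : mu.-integrable setT g.
  by apply: integrableZl => //; exact: integrable_normal_pdf.
apply: le_lt_trans (integrableP _ _ _ intg).2; apply: ge0_le_integral => //.
- by move=> t _; rewrite -EFinM lee_fin mulr_ge0 ?normal_pdf_ge0.
- apply: emeasurable_funM => //.
  by apply/measurable_EFinP; exact: measurable_normal_pdf.
- by apply: measurableT_comp => //; exact: measurable_int intg.
- move=> t _; rewrite /g -!EFinM /normal_pdf (negbTE sqrt2_neq0).
  rewrite mulrA divfK ?gt_eqF //.
  rewrite lee_fin ger0_norm ?mulr_ge0 ?normal_peak_ge0 ?normal_fun_ge0 //.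
  by have := normr_normal_pdf_le t; rewrite /normal_pdf oner_eq0.
Qed.

End normal_prob_first_moment.

Lemma lipschitz_continuous {R : realType} (g : R -> R) (L : R) : 0 <= L ->
  (forall s t, `|g t - g s| <= L * `|t - s|) -> continuous g.
Proof.
move=> L0 gL x; apply/cvgrPdist_le => /= e e0.
have L1 : 0 < L + 1 by rewrite ltr_wpDl.
near=> y; apply: le_trans (gL y x) _.
have xy : `|x - y| <= e / (L + 1).
  near: y; apply/nbhs_normP; exists (e / (L + 1)) => /=; first by rewrite divr_gt0.
  by move=> z /= /ltW.
apply: le_trans (ler_wpM2l L0 xy) _.
rewrite mulrA ler_pdivrMr //; nra.
Unshelve. all: by end_near.
Qed.

Section gaussian_expectation.
Context {R : realType}.
Local Notation N := (normal_prob (0:R) 1).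

Definition l1dist {n} (x y : 'rV[R]_n) : R := \sum_(i < n) `|x 0 i - y 0 i|.

Definition l1_lipschitz {n} (f : 'rV[R]_n -> R) :=
  exists2 L : R, 0 <= L & forall x y, `|f x - f y| <= L * l1dist x y.

Definition gexp {n} (f : 'rV[R]_n -> R) : R := fine (gauss_exp (fun x => (f x)%:E)).

Definition row_cons {m} (t : R) (v : 'rV[R]_m) : 'rV[R]_m.+1 :=
  castmx (erefl, add1n m) (row_mx (\row_(_ < 1) t) v).

Lemma row_cons0 m t (v : 'rV[R]_m) : row_cons t v 0 ord0 = t.
Proof.
rewrite /row_cons castmxE /=.
have -> : cast_ord (esym (add1n m)) ord0 = lshift m (ord0 : 'I_1) by apply: val_inj.
by rewrite row_mxEl mxE.
Qed.

Lemma row_consS m t (v : 'rV[R]_m) (i : 'I_m) : row_cons t v 0 (lift ord0 i) = v 0 i.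
Proof.
rewrite /row_cons castmxE /=.
have -> : cast_ord (esym (add1n m)) (lift ord0 i) = rshift 1 i by apply: val_inj.
by rewrite row_mxEr cast_ord_id.
Qed.

Lemma l1dist_row_cons m t s (v w : 'rV[R]_m) :
  l1dist (row_cons t v) (row_cons s w) = `|t - s| + l1dist v w.
Proof.
rewrite /l1dist big_ord_recl !row_cons0; congr (_ + _).
by apply: eq_bigr => i _; rewrite !row_consS.
Qed.

Lemma l1distC n (x y : 'rV[R]_n) : l1dist x y = l1dist y x.
Proof. by apply: eq_bigr => i _; rewrite distrC. Qed.

Lemma l1_lipschitz_row_cons m (F : 'rV[R]_m.+1 -> R) t :
  l1_lipschitz F -> l1_lipschitz (fun v => F (row_cons t v)).
Proof.
case=> L L0 FL; exists L => // v w.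
by apply: le_trans (FL _ _) _; rewrite l1dist_row_cons subrr normr0 add0r.
Qed.

Lemma l1_lipschitz_lin n (f g : 'rV[R]_n -> R) a b :
  l1_lipschitz f -> l1_lipschitz g -> l1_lipschitz (fun x => a * f x + b * g x).
Proof.
case=> L L0 fL [M M0 gM]; exists (`|a| * L + `|b| * M) => [|x y].
  by rewrite addr_ge0 // mulr_ge0.
have -> : a * f x + b * g x - (a * f y + b * g y) = a * (f x - f y) + b * (g x - g y).
  by ring.
apply: le_trans (ler_normD _ _) _; rewrite !normrM mulrDl -!mulrA.
by apply: lerD; exact: ler_wpM2l.
Qed.

Lemma l1_lipschitz_cst n c : l1_lipschitz (fun _ : 'rV[R]_n => c).
Proof. by exists 0 => // x y; rewrite subrr normr0 mul0r. Qed.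

Record gexp_spec n : Prop := GexpSpec {
  gauss_expE : forall f : 'rV[R]_n -> R, l1_lipschitz f ->
    gauss_exp (fun x => (f x)%:E) = (gexp f)%:E;
  gexp_lin : forall (f g : 'rV[R]_n -> R) a b, l1_lipschitz f -> l1_lipschitz g ->
    gexp (fun x => a * f x + b * g x) = a * gexp f + b * gexp g;
  gexp_le : forall f g : 'rV[R]_n -> R, l1_lipschitz f -> l1_lipschitz g ->
    (forall x, f x <= g x) -> gexp f <= gexp g;
  gexp_cst : forall c, gexp (fun _ : 'rV[R]_n => c) = c }.

Lemma gexp_spec0 : gexp_spec 0.
Proof. by split => // f g _ _; apply. Qed.

Lemma gexp_normr_le n (h : 'rV[R]_n -> R) (c : R) : gexp_spec n ->
  l1_lipschitz h -> (forall x, `|h x| <= c) -> `|gexp h| <= c.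
Proof.
move=> G hL hc.
have hlo x : - c <= h x by have := hc x; rewrite ler_norml => /andP[].
have hhi x : h x <= c by have := hc x; rewrite ler_norml => /andP[].
have lo := gexp_le G (l1_lipschitz_cst _ (- c)) hL hlo.
have hi := gexp_le G hL (l1_lipschitz_cst _ c) hhi.
by rewrite !(gexp_cst G) in lo hi; rewrite ler_norml lo hi.
Qed.

Section gexp_spec_succ.
Variables (m : nat) (G : gexp_spec m).

Definition partial_gexp (F : 'rV[R]_m.+1 -> R) (t : R) : R :=
  gexp (fun v => F (row_cons t v)).

Lemma partial_gexp_lipschitz F (L : R) : 0 <= L ->
  (forall x y, `|F x - F y| <= L * l1dist x y) ->
  forall s t, `|partial_gexp F t - partial_gexp F s| <= L * `|t - s|.
Proof.
move=> L0 FL s t; have LF : l1_lipschitz F by exists L.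
have -> : partial_gexp F t - partial_gexp F s =
    gexp (fun v => -1 * F (row_cons s v) + 1 * F (row_cons t v)).
  by rewrite (gexp_lin G) /partial_gexp; [ring | exact: l1_lipschitz_row_cons..].
apply: gexp_normr_le => // [|v].
  by apply: l1_lipschitz_lin; exact: l1_lipschitz_row_cons.
rewrite mulN1r mul1r addrC; apply: le_trans (FL _ _) _.
by rewrite l1dist_row_cons [l1dist v v]big1 ?addr0 // => i _; rewrite subrr normr0.
Qed.

Lemma continuous_partial_gexp F : l1_lipschitz F -> continuous (partial_gexp F).
Proof.
by case=> L L0 FL; apply: (lipschitz_continuous L0); exact: partial_gexp_lipschitz.
Qed.

(* The partial expectation grows at most linearly, and [|t|] is [N]-integrable. *)
Lemma integrable_partial_gexp F : l1_lipschitz F ->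
  N.-integrable setT (EFin \o partial_gexp F).
Proof.
move=> LF; have [L L0 FL] := LF; set g := partial_gexp F.
have intM : N.-integrable setT (fun t => (`|g 0| + L * `|t|)%:E).
  under eq_fun do rewrite EFinD EFinM.
  apply: integrableD => //; first exact: finite_measure_integrable_cst.
  by apply: integrableZl => //; exact: integrable_normr_normal_prob.
apply: le_integrable intM => //.
  apply/measurable_EFinP; apply: continuous_measurable_fun.
  exact: continuous_partial_gexp.
move=> t _ /=; rewrite lee_fin [leRHS]ger0_norm ?addr_ge0 ?mulr_ge0 //.
have := partial_gexp_lipschitz L0 FL 0 t; rewrite subr0 => gt.
have := ler_normD (g t - g 0) (g 0); rewrite subrK; lra.
Qed.

Lemma gexp_succE F : l1_lipschitz F -> gauss_exp (fun x => (F x)%:E) =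
  (\int[N]_t (partial_gexp F t)%:E)%E.
Proof.
move=> LF /=; apply: eq_integral => t _.
exact/(gauss_expE G)/l1_lipschitz_row_cons.
Qed.

Lemma gexp_succ_Rintegral F : l1_lipschitz F ->
  gexp F = \int[N]_t partial_gexp F t.
Proof. by move=> LF; rewrite /gexp gexp_succE. Qed.

Lemma gexp_specS : gexp_spec m.+1.
Proof.
split.
- move=> F LF; rewrite gexp_succE // (gexp_succ_Rintegral LF) fineK //.
  exact: integrable_fin_num (integrable_partial_gexp LF).
- move=> F F' a b LF LF'.
  have scale f (i : N.-integrable setT (EFin \o f)) c :
      N.-integrable setT (EFin \o (fun t => c * f t)).
    by apply: eq_integrable (integrableZl _ c i) => // t _; rewrite EFinM.
  have [iF iF'] := (integrable_partial_gexp LF, integrable_partial_gexp LF').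
  rewrite !gexp_succ_Rintegral //; last exact: l1_lipschitz_lin.
  rewrite -!RintegralZl // -RintegralD //; try exact: scale.
  apply: eq_Rintegral => t _; rewrite /partial_gexp (gexp_lin G) //.
  - exact: l1_lipschitz_row_cons t LF.
  - exact: l1_lipschitz_row_cons t LF'.
- move=> F F' LF LF' FF'; rewrite !gexp_succ_Rintegral //.
  apply: le_Rintegral => //; try exact: integrable_partial_gexp.
  by move=> t _; apply: (gexp_le G) => //; exact: l1_lipschitz_row_cons.
- move=> c; rewrite gexp_succ_Rintegral; last exact: l1_lipschitz_cst.
  under eq_Rintegral do rewrite /partial_gexp (gexp_cst G).
  by rewrite Rintegral_cst //= probability_setT mulr1.
Qed.

End gexp_spec_succ.

Lemma gexp_specP n : gexp_spec n.
Proof. by elim: n => [|n IHn]; [exact: gexp_spec0 | exact: gexp_specS]. Qed.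

End gaussian_expectation.

Section cauchy_schwarz.
Context {R : realType}.

Lemma sum_sqr_le0 n (p : 'I_n -> R) : \sum_i p i ^+ 2 <= 0 -> p =1 fun=> 0.
Proof.
move=> p0 i; apply/eqP; rewrite -sqrf_eq0; apply/eqP.
have sq_ge0 j : true -> 0 <= p j ^+ 2 by move=> _; exact: sqr_ge0.
by apply: (psumr_eq0P sq_ge0) => //; apply/eqP; rewrite eq_le p0 sumr_ge0.
Qed.

Lemma cauchy_schwarz_le n (p q : 'I_n -> R) (s r : R) : 0 <= s -> 0 <= r ->
  \sum_i p i ^+ 2 <= s ^+ 2 -> \sum_i q i ^+ 2 <= r ^+ 2 ->
  \sum_i p i * q i <= s * r.
Proof.
move=> s0 r0 ps qr.
have [s_eq0|s_neq0] := eqVneq s 0.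
  rewrite s_eq0 expr0n in ps.
  by rewrite s_eq0 big1 ?mul0r // => i _; rewrite sum_sqr_le0 ?mul0r.
have [r_eq0|r_neq0] := eqVneq r 0.
  rewrite r_eq0 expr0n in qr.
  by rewrite r_eq0 big1 ?mulr0 // => i _; rewrite (sum_sqr_le0 qr) mulr0.
have rs_gt0 : 0 < 2 * (r * s).
  by rewrite mulr_gt0 ?mulr_gt0 // lt0r ?r_neq0 ?s_neq0.
rewrite -(ler_pM2l rs_gt0).
have amgm : 2 * (r * s) * \sum_i p i * q i <=
    r ^+ 2 * \sum_i p i ^+ 2 + s ^+ 2 * \sum_i q i ^+ 2.
  rewrite !mulr_sumr -big_split /=; apply: ler_sum => i _.
  have := sqr_ge0 (r * p i - s * q i); nra.
apply: le_trans amgm _.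
have := ler_wpM2l (sqr_ge0 r) ps; have := ler_wpM2l (sqr_ge0 s) qr; nra.
Qed.

End cauchy_schwarz.

Lemma mulr_sup_le {R : realType} (A : set R) (l M : R) : A !=set0 -> has_ubound A ->
  0 <= l -> (forall y, A y -> l * y <= M) -> l * sup A <= M.
Proof.
move=> [y0 Ay0] ubA l0 AM; have [l_eq0|l_neq0] := eqVneq l 0.
  by move: (AM _ Ay0); rewrite l_eq0 !mul0r.
have l_gt0 : 0 < l by rewrite lt0r l_neq0.
rewrite mulrC -ler_pdivlMr //; apply: ge_sup; first by exists y0.
by move=> y Ay; rewrite ler_pdivlMr // mulrC; exact: AM.
Qed.

Section local_sup.
Context {R : realType} {n : nat} (K : set 'rV[R]_n) (mu : 'rV[R]_n).
Hypothesis Kmu : K mu.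

Definition l1norm (x : 'rV[R]_n) : R := \sum_i `|x 0 i|.

Definition local_sup (x : 'rV[R]_n) (e : R) : R :=
  sup [set inner x t | t in eball mu e `&` K].

Lemma eball_center e : 0 <= e -> eball mu e mu.
Proof.
by move=> e0; split => //; rewrite big1 ?sqr_ge0 // => i _; rewrite subrr expr0n.
Qed.

Lemma eball_coord t e i : eball mu e t -> `|t 0 i - mu 0 i| <= e.
Proof.
case=> e0 te; rewrite -(ger0_norm e0) -ler_sqr ?nnegrE // !real_normK ?num_real //.
by apply: le_trans te; rewrite (bigD1 i) //= lerDl sumr_ge0 // => j _; exact: sqr_ge0.
Qed.

Lemma inner_eball_le x t e : eball mu e t -> inner x t <= inner x mu + e * l1norm x.
Proof.
move=> te; have -> : inner x t = inner x mu + \sum_i x 0 i * (t 0 i - mu 0 i).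
  by rewrite /inner -big_split /=; apply: eq_bigr => i _; ring.
rewrite lerD2l /l1norm mulr_sumr; apply: ler_sum => i _.
apply: le_trans (ler_norm _) _; rewrite normrM mulrC.
by apply: ler_wpM2r => //; exact: eball_coord te.
Qed.

Lemma inner_eball_lipschitz x y t e : eball mu e t ->
  inner x t <= inner y t + (l1norm mu + e) * l1dist x y.
Proof.
move=> te; have -> : inner x t = inner y t + \sum_i (x 0 i - y 0 i) * t 0 i.
  by rewrite /inner -big_split /=; apply: eq_bigr => i _; ring.
rewrite lerD2l /l1dist mulr_sumr; apply: ler_sum => i _.
apply: le_trans (ler_norm _) _; rewrite normrM mulrC; apply: ler_wpM2r => //.
have mu_i : `|mu 0 i| <= l1norm mu by rewrite /l1norm (bigD1 i) //= lerDl sumr_ge0.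
have := ler_normD (t 0 i - mu 0 i) (mu 0 i); rewrite subrK.
have := eball_coord i te; lra.
Qed.

Let local_set_neq0 x e : 0 <= e ->
  [set inner x t | t in eball mu e `&` K] !=set0.
Proof.
by move=> e0; exists (inner x mu), mu => //; split => //; exact: eball_center.
Qed.

Let local_set_ub x e : has_ubound [set inner x t | t in eball mu e `&` K].
Proof.
by exists (inner x mu + e * l1norm x) => _ [t [te _] <-]; exact: inner_eball_le.
Qed.

Lemma local_sup_ge x e : 0 <= e -> inner x mu <= local_sup x e.
Proof.
move=> e0; apply: ub_le_sup; first exact: local_set_ub.
by exists mu => //; split => //; exact: eball_center.
Qed.

Lemma local_sup_le x e : 0 <= e -> local_sup x e <= inner x mu + e * l1norm x.
Proof.
move=> e0; apply: ge_sup; first exact: local_set_neq0.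
by move=> _ [t [te _] <-]; exact: inner_eball_le.
Qed.

Lemma local_sup_mono x a b : 0 <= a -> a <= b -> local_sup x a <= local_sup x b.
Proof.
move=> a0 ab; apply: ge_sup; first exact: local_set_neq0.
move=> _ [t [[_ ta] Kt] <-]; apply: ub_le_sup; first exact: local_set_ub.
exists t => //; split => //; split; first exact: le_trans ab.
by apply: le_trans ta _; rewrite ler_sqr ?nnegrE //; exact: le_trans ab.
Qed.

Lemma l1_lipschitz_local_sup e : 0 <= e -> l1_lipschitz (local_sup^~ e).
Proof.
move=> e0; have le x y : local_sup x e <= local_sup y e + (l1norm mu + e) * l1dist x y.
  apply: ge_sup; first exact: local_set_neq0.
  move=> _ [t [te Kt] <-]; apply: le_trans (inner_eball_lipschitz x y te) _.
  by rewrite lerD2r; apply: ub_le_sup; [exact: local_set_ub | exists t].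
exists (l1norm mu + e) => [|x y]; first by rewrite addr_ge0 // sumr_ge0.
by have := le x y; have := le y x; rewrite l1distC ler_norml; lra.
Qed.

Lemma eball_convex t1 t2 a b l : 0 <= l -> l <= 1 ->
  eball mu a t1 -> eball mu b t2 ->
  eball mu (l * a + (1 - l) * b) (l *: t1 + (1 - l) *: t2).
Proof.
move=> l0 l1 [a0 t1a] [b0 t2b]; have l1' : 0 <= 1 - l by lra.
split; first by rewrite addr_ge0 // mulr_ge0.
pose p i := l * (t1 0 i - mu 0 i); pose q i := (1 - l) * (t2 0 i - mu 0 i).
have scale (c k : R) (u : 'I_n -> R) : \sum_i u i ^+ 2 <= c ^+ 2 -> 0 <= k ->
    \sum_i (k * u i) ^+ 2 <= (k * c) ^+ 2.
  move=> uc k0; under eq_bigr do rewrite exprMn.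
  by rewrite -mulr_sumr exprMn ler_wpM2l ?sqr_ge0.
have pa : \sum_i p i ^+ 2 <= (l * a) ^+ 2.
  exact: (scale _ _ (fun i => t1 0 i - mu 0 i)).
have qb : \sum_i q i ^+ 2 <= ((1 - l) * b) ^+ 2.
  exact: (scale _ _ (fun i => t2 0 i - mu 0 i)).
have pq := cauchy_schwarz_le (mulr_ge0 l0 a0) (mulr_ge0 l1' b0) pa qb.
have -> : \sum_i ((l *: t1 + (1 - l) *: t2) 0 i - mu 0 i) ^+ 2 =
    \sum_i p i ^+ 2 + 2 * \sum_i p i * q i + \sum_i q i ^+ 2.
  rewrite mulr_sumr -!big_split /=; apply: eq_bigr => i _.
  by rewrite /p /q !mxE; ring.
nra.
Qed.

Lemma inner_convex x (t1 t2 : 'rV[R]_n) l :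
  inner x (l *: t1 + (1 - l) *: t2) = l * inner x t1 + (1 - l) * inner x t2.
Proof.
by rewrite /inner !mulr_sumr -big_split /=; apply: eq_bigr => i _; rewrite !mxE; ring.
Qed.

Hypothesis K_convex : convex_set (K : set (convex_lmodType 'rV[R]_n)).

Lemma local_sup_concave x a b l : 0 <= a -> 0 <= b -> 0 <= l -> l <= 1 ->
  l * local_sup x a + (1 - l) * local_sup x b <= local_sup x (l * a + (1 - l) * b).
Proof.
move=> a0 b0 l0 l1; have l1' : 0 <= 1 - l by lra.
set c := l * a + (1 - l) * b.
suff : (1 - l) * local_sup x b <= local_sup x c - l * local_sup x a by lra.
apply: (mulr_sup_le _ _ l1'); [exact: local_set_neq0 | exact: local_set_ub |].
move=> _ [t2 [t2b Kt2] <-].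
suff : l * local_sup x a <= local_sup x c - (1 - l) * inner x t2 by lra.
apply: (mulr_sup_le _ _ l0); [exact: local_set_neq0 | exact: local_set_ub |].
move=> _ [t1 [t1a Kt1] <-].
suff : l * inner x t1 + (1 - l) * inner x t2 <= local_sup x c by lra.
rewrite -inner_convex; apply: ub_le_sup; first exact: local_set_ub.
exists (l *: t1 + (1 - l) *: t2) => //; split.
  exact: eball_convex l0 l1 t1a t2b.
by have := K_convex (Itv01 l0 l1) (mem_set Kt1) (mem_set Kt2); rewrite inE.
Qed.

End local_sup.

Lemma normr_max0_le {R : realDomainType} (x y : R) :
  `|Num.max x 0 - Num.max y 0| <= `|x - y|.
Proof.
have xy := ler_norm (x - y); have yx : y - x <= `|x - y| by rewrite distrC ler_norm.
rewrite ler_norml.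
by case: (leP 0 x) => hx; case: (leP 0 y) => hy; apply/andP; split; lra.
Qed.

Section penalized_argmax.
Context {R : realType}.
Variables (w : R -> R) (C : R).
Hypothesis C_ge0 : 0 <= C.
Hypothesis w_mono : forall a b : R, 0 <= a -> a <= b -> w a <= w b.
Hypothesis w_concave : forall a b l : R, 0 <= a -> 0 <= b -> 0 <= l -> l <= 1 ->
  l * w a + (1 - l) * w b <= w (l * a + (1 - l) * b).
Hypothesis w_growth : forall e : R, 0 <= e -> w e <= w 0 + e * C.

Definition is_argmax (s e : R) := 0 <= e /\
  forall e' : R, 0 <= e' -> s * w e' - e' ^+ 2 / 2 <= s * w e - e ^+ 2 / 2.

Lemma penalized_le_at0 (s e : R) : 0 <= s -> 0 <= e -> 2 * s * C <= e ->
  s * w e - e ^+ 2 / 2 <= s * w 0.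
Proof.
move=> s0 e0 sCe; have := ler_wpM2l s0 (w_growth e0).
have := ler_wpM2r e0 sCe.
rewrite expr2; nra.
Qed.

Lemma argmax_le (s e : R) : 0 <= s -> is_argmax s e -> e <= 2 * s * C.
Proof.
move=> s0 [e0 emax]; rewrite leNgt; apply/negP => sCe.
have e_gt0 : 0 < e by apply: le_lt_trans sCe; rewrite !mulr_ge0.
have := emax 0 (lexx _); have := ler_wpM2l s0 (w_growth e0).
have : 2 * s * C * e < e * e by rewrite ltr_pM2r.
rewrite expr0n expr2 /=; nra.
Qed.

Lemma concave_increment_le (a b : R) : 0 <= a -> a <= b ->
  w b - w a <= C * (b - a).
Proof.
move=> a0 ab; have b0 : 0 <= b by exact: le_trans ab.
have [b_eq0|b_neq0] := eqVneq b 0.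
  have a_eq0 : a = 0 by lra.
  by rewrite a_eq0 b_eq0 !subrr mulr0.
have b_gt0 : 0 < b by rewrite lt0r b_neq0.
pose l := a / b; have l0 : 0 <= l by rewrite divr_ge0.
have l1 : l <= 1 by rewrite ler_pdivrMr // mul1r.
have l1' : 0 <= 1 - l by lra.
have la : l * b = a by rewrite /l divfK ?gt_eqF.
have := w_concave b0 (lexx 0) l0 l1; rewrite mulr0 addr0 la.
have := ler_wpM2l l1' (w_growth b0).
have : (1 - l) * (b * C) = C * (b - a) by rewrite mulrA mulrBl mul1r la mulrC.
nra.
Qed.

Lemma concave_lipschitz (x y : R) : 0 <= x -> 0 <= y ->
  `|w x - w y| <= C * `|x - y|.
Proof.
wlog xy : x y / y <= x => [wxy x0 y0|x0 y0].
  have [yx|/ltW xy] := leP y x; first exact: wxy yx x0 y0.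
  by rewrite distrC [`|x - y|]distrC; exact: wxy xy y0 x0.
rewrite !ger0_norm ?subr_ge0 ?w_mono //; exact: concave_increment_le.
Qed.

(* Beyond [2 s C] the objective stays below its value at [0], so a maximiser
   over [[0, 2 s C]], given by the extreme value theorem, is global. *)
Lemma argmax_exists (s : R) : 0 <= s -> exists e, is_argmax s e.
Proof.
move=> s0; set M := 2 * s * C; have M0 : 0 <= M by rewrite !mulr_ge0.
pose h (e : R) := s * w (Num.max e 0) - e ^+ 2 / 2.
have h_cont : continuous h.
  have wmax_cont : continuous (fun e : R => w (Num.max e 0)).
    apply: (lipschitz_continuous C_ge0) => x y.
    apply: le_trans (concave_lipschitz _ _) _; rewrite ?le_max ?lexx ?orbT //.
    by apply: ler_wpM2l => //; exact: normr_max0_le.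
  move=> x; apply: cvgB; first by apply: cvgM; [exact: cvg_cst | exact: wmax_cont].
  by apply: cvgM; [exact: exprn_continuous | exact: cvg_cst].
have [e eM emax] := EVT_max M0 (continuous_subspaceT h_cont).
move: eM; rewrite in_itv /= => /andP[e0 eM].
have hE x : 0 <= x -> h x = s * w x - x ^+ 2 / 2 by move=> x0; rewrite /h max_l.
exists e; split => // e' e'0; rewrite -hE // -hE //.
have [e'M|Me'] := lerP e' M; first by apply: emax; rewrite in_itv /= e'0 e'M.
apply: le_trans (emax 0 _); last by rewrite in_itv /= lexx M0.
rewrite hE // (hE 0) // expr0n /= mul0r subr0.
by apply: penalized_le_at0 => //; exact: ltW.
Qed.

Lemma argmax_mono (s1 s2 e1 e2 : R) : 0 <= s1 -> s1 < s2 ->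
  is_argmax s1 e1 -> is_argmax s2 e2 -> e1 <= e2.
Proof.
move=> s10 s12 [e10 e1max] [e20 e2max]; rewrite leNgt; apply/negP => e21.
have := e1max _ e20; have := e2max _ e10.
have w21 := w_mono e20 (ltW e21).
have : e2 ^+ 2 < e1 ^+ 2 by rewrite ltr_pXn2r.
nra.
Qed.

Lemma concave_increment_antitone (p q r t : R) : 0 <= p -> p <= q -> q <= r -> r <= t ->
  q - p = t - r -> w t - w r <= w q - w p.
Proof.
move=> p0 pq qr rt eqlen.
have [pt|pt] := eqVneq p t.
  have qp : q = p by lra.
  have rp : r = p by lra.
  by rewrite qp rp pt.
have tp : 0 < t - p by lra.
pose l := (t - q) / (t - p).
have l0 : 0 <= l by rewrite divr_ge0 //; lra.
have l1 : l <= 1 by rewrite ler_pdivrMr // mul1r; lra.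
have t0 : 0 <= t by lra.
have l0' : 0 <= 1 - l by lra.
have l1' : 1 - l <= 1 by lra.
have := w_concave p0 t0 l0 l1; have := w_concave p0 t0 l0' l1'.
have -> : l * p + (1 - l) * t = q by rewrite /l; field; rewrite gt_eqF.
have -> : (1 - l) * p + (1 - (1 - l)) * t = r.
  have -> : r = t - q + p by lra.
  by rewrite /l; field; rewrite gt_eqF.
lra.
Qed.

(* If [b > k a], set [d := (b - k a) / (1 + k)]: optimality of [a] against
   [a + d] and of [b] against [b - d], together with the decreasing increments
   of [w], give [2 b - d <= k (2 a + d)], i.e. [b <= k a]. *)
Lemma argmax_scale (s k a b : R) : 0 < s -> 1 <= k ->
  is_argmax s a -> is_argmax (k * s) b -> b <= k * a.
Proof.
move=> s0 k1 [a0 amax] [b0 bmax]; rewrite leNgt; apply/negP => kab.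
have k0 : 0 < k by lra.
pose d := (b - k * a) / (1 + k).
have dk : d * (1 + k) = b - k * a by rewrite /d divfK // gt_eqF //; lra.
have d0 : 0 < d by rewrite /d divr_gt0 //; lra.
have ad_bd : a + d <= b - d.
  have : 0 <= (k - 1) * (a + b) by rewrite mulr_ge0 //; lra.
  nra.
have ad0 : 0 <= a + d by rewrite addr_ge0 // ltW.
have incr : w b - w (b - d) <= w (a + d) - w a.
  by apply: concave_increment_antitone => //; lra.
have opt_a : s * (w (a + d) - w a) <= d * (2 * a + d) / 2.
  by have := amax _ ad0; lra.
have opt_b : d * (2 * b - d) / 2 <= k * s * (w b - w (b - d)).
  by have := bmax _ (le_trans ad0 ad_bd); lra.
have ks_incr := ler_wpM2l (ltW (mulr_gt0 k0 s0)) incr.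
have k_opt_a := ler_wpM2l (ltW k0) opt_a.
have : d * (2 * b - d) <= d * (k * (2 * a + d)) by nra.
rewrite ler_pM2l //; nra.
Qed.

End penalized_argmax.

Lemma l1_lipschitz_l1norm {R : realType} {n : nat} : l1_lipschitz (@l1norm R n).
Proof.
exists 1 => // x y; rewrite mul1r ler_norml.
have le (u v : 'rV[R]_n) : l1norm u - l1norm v <= l1dist u v.
  by rewrite /l1norm /l1dist -sumrB; apply: ler_sum => i _; exact: lerB_dist.
by have := le x y; have := le y x; rewrite l1distC; lra.
Qed.

Lemma gexp_l1norm_ge0 {R : realType} {n : nat} : 0 <= gexp (@l1norm R n).
Proof.
have G := @gexp_specP R n; rewrite -(gexp_cst G 0).
apply: (gexp_le G); [exact: l1_lipschitz_cst | exact: l1_lipschitz_l1norm |].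
by move=> x; exact: sumr_ge0.
Qed.

Section local_width.
Context {R : realType} {n : nat} (K : set 'rV[R]_n) (mu : 'rV[R]_n).
Hypothesis Kmu : K mu.
Hypothesis K_convex : convex_set (K : set (convex_lmodType 'rV[R]_n)).

Definition local_width (e : R) : R := gexp (local_sup K mu ^~ e).

Let G := @gexp_specP R n.

Lemma local_gwE e : 0 <= e -> local_gw K mu e = (local_width e)%:E.
Proof. by move=> e0; apply: (gauss_expE G); exact: l1_lipschitz_local_sup. Qed.

Lemma local_width_mono a b : 0 <= a -> a <= b -> local_width a <= local_width b.
Proof.
move=> a0 ab; have b0 := le_trans a0 ab.
apply: (gexp_le G); try exact: l1_lipschitz_local_sup.
by move=> x; exact: local_sup_mono.
Qed.

Lemma local_width_concave a b l : 0 <= a -> 0 <= b -> 0 <= l -> l <= 1 ->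
  l * local_width a + (1 - l) * local_width b <= local_width (l * a + (1 - l) * b).
Proof.
move=> a0 b0 l0 l1.
have c0 : 0 <= l * a + (1 - l) * b by rewrite addr_ge0 ?mulr_ge0 //; lra.
have [La Lb] := (l1_lipschitz_local_sup Kmu a0, l1_lipschitz_local_sup Kmu b0).
rewrite /local_width -(gexp_lin G) //; apply: (gexp_le G).
- exact: l1_lipschitz_lin.
- exact: l1_lipschitz_local_sup.
- by move=> x; exact: local_sup_concave.
Qed.

Lemma local_width_growth e : 0 <= e ->
  local_width e <= local_width 0 + e * gexp (@l1norm R n).
Proof.
move=> e0; have L0 := l1_lipschitz_local_sup Kmu (lexx 0).
rewrite -[local_width 0]mul1r addrC -(gexp_lin G) //; last exact: l1_lipschitz_l1norm.
apply: (gexp_le G).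
- exact: l1_lipschitz_local_sup.
- exact: l1_lipschitz_lin l1_lipschitz_l1norm L0.
- move=> x; apply: le_trans (local_sup_le Kmu x e0) _.
  by rewrite mul1r addrC lerD2l; exact: local_sup_ge.
Qed.

End local_width.

Lemma sup_ge0 {R : realType} (A : set R) : has_ubound A ->
  (forall a, A a -> 0 <= a) -> 0 <= sup A.
Proof.
move=> ubA A0; have [->|/set0P[a Aa]] := eqVneq A set0; first by rewrite sup0.
by apply: le_trans (A0 _ Aa) _; exact: ub_le_sup.
Qed.

Lemma sup_le_mulr {R : realType} (A B : set R) (k : R) :
  0 <= k -> has_ubound B -> 0 <= sup B ->
  (forall a, A a -> exists2 b, B b & a <= k * b) -> sup A <= k * sup B.
Proof.
move=> k0 ubB supB0 AB; have [->|/set0P A0] := eqVneq A set0.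
  by rewrite sup0 mulr_ge0.
apply: ge_sup => // a /AB[b Bb ab]; apply: le_trans ab _.
by apply: ler_wpM2l => //; exact: ub_le_sup.
Qed.

Section eps_bar.
Context {R : realType} {n : nat} (K : set 'rV[R]_n).
Hypothesis K_convex : convex_set (K : set (convex_lmodType 'rV[R]_n)).

Local Notation eps_set s := [set e | exists2 mu, K mu & is_eps_mu K mu s e].
Local Notation C := (gexp (@l1norm R n)).

Lemma is_eps_muE mu s e : K mu ->
  is_eps_mu K mu s e <-> is_argmax (local_width K mu) s e.
Proof.
move=> Kmu; split=> -[e0 emax]; split => // e' e'0; move: (emax e' e'0);
  by rewrite !local_gwE // -!EFinM -!EFinB lee_fin.
Qed.

Lemma eps_mu_exists mu s : K mu -> 0 <= s -> exists e, is_eps_mu K mu s e.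
Proof.
move=> Kmu s0; have [e emax] := argmax_exists gexp_l1norm_ge0 (local_width_mono Kmu)
  (local_width_concave Kmu K_convex) (local_width_growth Kmu) s0.
by exists e; apply/is_eps_muE.
Qed.

Lemma eps_set_ub s : 0 <= s -> has_ubound (eps_set s).
Proof.
move=> s0; exists (2 * s * C) => e [mu Kmu /(is_eps_muE _ _ Kmu) emax].
exact: (argmax_le gexp_l1norm_ge0 (local_width_growth Kmu) s0 emax).
Qed.

Lemma eps_bar_ge0 s : 0 <= s -> 0 <= eps_bar K s.
Proof. by move=> s0; apply: sup_ge0 (eps_set_ub s0) _ => e [mu _ []]. Qed.

Lemma eps_bar_mono s1 s2 : 0 <= s1 -> s1 <= s2 -> eps_bar K s1 <= eps_bar K s2.
Proof.
move=> s10 s12; have s20 := le_trans s10 s12.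
rewrite -[leRHS]mul1r; apply: sup_le_mulr (eps_set_ub s20) (eps_bar_ge0 s20) _ => //.
move=> e1 [mu Kmu e1max]; have [e2 e2max] := eps_mu_exists Kmu s20.
move: s12; rewrite le_eqVlt => /orP[/eqP s1s2|s1s2].
  by exists e1; [exists mu => //; rewrite -s1s2 | rewrite mul1r].
exists e2; first by exists mu.
rewrite mul1r; apply: (argmax_mono (local_width_mono Kmu) s10 s1s2).
all: exact/(is_eps_muE _ _ Kmu).
Qed.

Lemma eps_bar_scale_le s c : 0 <= s -> 1 <= c ->
  eps_bar K (c * s) <= c * eps_bar K s.
Proof.
move=> s0 c1; have c0 : 0 <= c by lra.
have [s_eq0|s_neq0] := eqVneq s 0.
  by rewrite s_eq0 mulr0 ler_peMl //; exact: eps_bar_ge0.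
have s_gt0 : 0 < s by rewrite lt0r s_neq0.
apply: sup_le_mulr (eps_set_ub s0) (eps_bar_ge0 s0) _ => // b [mu Kmu bmax].
have [a amax] := eps_mu_exists Kmu s0.
exists a; first by exists mu.
apply: (argmax_scale (local_width_concave Kmu K_convex) s_gt0 c1).
all: exact/(is_eps_muE _ _ Kmu).
Qed.

Lemma eps_bar_scale_ge s c : 0 <= s -> 0 <= c -> c < 1 ->
  c * eps_bar K s <= eps_bar K (c * s).
Proof.
move=> s0 c0 c1; have [c_eq0|c_neq0] := eqVneq c 0.
  by rewrite c_eq0 !mul0r; exact: eps_bar_ge0.
have c_gt0 : 0 < c by rewrite lt0r c_neq0.
have cV1 : 1 <= c^-1 by rewrite invf_ge1 // ltW.
have := eps_bar_scale_le (mulr_ge0 c0 s0) cV1.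
by rewrite mulrA mulVf // mul1r => /(ler_wpM2l c0); rewrite mulrA mulfV // mul1r.
Qed.

End eps_bar.

Unset Implicit Arguments.

Theorem mainTheorem20 (R : realType) (n : nat) (K : set 'rV[R]_n)
  (K_closed : closed K)
  (K_convex : convex_set (K : set (convex_lmodType 'rV[R]_n))) :
  (forall s1 s2 : R, 0 <= s1 -> s1 <= s2 -> eps_bar K s1 <= eps_bar K s2) /\
  (forall sigma c : R, 0 <= sigma -> 1 <= c ->
     eps_bar K sigma <= eps_bar K (c * sigma) /\
     eps_bar K (c * sigma) <= c * eps_bar K sigma) /\
  (forall sigma c : R, 0 <= sigma -> 0 <= c -> c < 1 ->
     c * eps_bar K sigma <= eps_bar K (c * sigma) /\
     eps_bar K (c * sigma) <= eps_bar K sigma).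
Proof.
have mono := eps_bar_mono K_convex.
split; [exact: mono | split => sigma c sigma0].
- move=> c1; split; last exact: eps_bar_scale_le.
  by apply: mono => //; rewrite ler_peMl.
- move=> c0 c1; split; first exact: eps_bar_scale_ge.
  by apply: mono; [rewrite mulr_ge0 | rewrite ler_piMl // ltW].
Qed.
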